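(* Let $(A,\circ,[\cdot,\cdot])$ be a dual pre-Poisson algebra and $(V;l_\circ,r_\circ,l_{[\cdot,\cdot]},r_{[\cdot,\cdot]})$ a finite-dimensional representation of it. Then $(V^*;-l_\circ^*,-l_\circ^*+r_\circ^*,l_{[\cdot,\cdot]}^*,-l_{[\cdot,\cdot]}^*-r_{[\cdot,\cdot]}^* )$ is a representation of $(A,\circ,[\cdot,\cdot])$. Consequently, $A\oplus V^*$ with $$(x+u^* )\circ(y+v^* )=x\circ y-l_\circ^*(x)v^*+(-l_\circ^*+r_\circ^* )(y)u^*,$$ $$[x+u^*,y+v^*]=[x,y]+l_{[\cdot,\cdot]}^*(x)v^*-(l_{[\cdot,\cdot]}^*+r_{[\cdot,\cdot]}^* )(y)u^*$$ is a dual pre-Poisson algebra.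
   Context: Field $\mathbb{F}$ of characteristic $0$. For $f:A\to\mathrm{End}(V)$, $f^*:A\to\mathrm{End}(V^* )$ is given by $\langle f^*(x)v^*,u\rangle=-\langle v^*,f(x)u\rangle$. A dual pre-Poisson algebra $(A,\circ,[\cdot,\cdot])$: $x\circ(y\circ z)=(x\circ y)\circ z=(y\circ x)\circ z$; $[x,[y,z]]=[[x,y],z]+[y,[x,z]]$; $[x,y\circ z]=[x,y]\circ z+y\circ[x,z]$; $[x\circ y,z]=x\circ[y,z]+y\circ[x,z]$; $[x,y]\circ z=-[y,x]\circ z$. A representation $(V;l_\circ,r_\circ,l_{[\cdot,\cdot]},r_{[\cdot,\cdot]})$ is a vector space $V$ with linear maps $A\to\mathrm{End}(V)$ satisfying, for all $x,y\in A$: $r_\circ(x)r_\circ(y)=r_\circ(y\circ x)=l_\circ(y)r_\circ(x)=r_\circ(x)l_\circ(y)$; $l_\circ(x\circ y)=l_\circ(x)l_\circ(y)=l_\circ(y)l_\circ(x)$; $l_{[\cdot,\cdot]}([x,y])=l_{[\cdot,\cdot]}(x)l_{[\cdot,\cdot]}(y)-l_{[\cdot,\cdot]}(y)l_{[\cdot,\cdot]}(x)$; $r_{[\cdot,\cdot]}([x,y])=r_{[\cdot,\cdot]}(y)r_{[\cdot,\cdot]}(x)+l_{[\cdot,\cdot]}(x)r_{[\cdot,\cdot]}(y)$; $r_{[\cdot,\cdot]}(x)r_{[\cdot,\cdot]}(y)=-r_{[\cdot,\cdot]}(x)l_{[\cdot,\cdot]}(y)$; $r_{[\cdot,\cdot]}(x\circ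 y)=r_\circ(y)r_{[\cdot,\cdot]}(x)+l_\circ(x)r_{[\cdot,\cdot]}(y)$; $l_{[\cdot,\cdot]}(x)r_\circ(y)=r_\circ(y)l_{[\cdot,\cdot]}(x)+r_\circ([x,y])$; $l_{[\cdot,\cdot]}(x)l_\circ(y)=l_\circ([x,y])+l_\circ(y)l_{[\cdot,\cdot]}(x)$; $r_{[\cdot,\cdot]}(x)r_\circ(y)=r_\circ([y,x])+l_\circ(y)r_{[\cdot,\cdot]}(x)$; $l_{[\cdot,\cdot]}(x\circ y)=l_\circ(x)l_{[\cdot,\cdot]}(y)+l_\circ(y)l_{[\cdot,\cdot]}(x)$; $r_{[\cdot,\cdot]}(x)(l_\circ-r_\circ)(y)=0$; $r_\circ(x)(l_{[\cdot,\cdot]}+r_{[\cdot,\cdot]})(y)=0$; $l_\circ([x,y]+[y,x])=0$. *)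

From HB Require Import structures.
From mathcomp Require Import all_boot all_order all_algebra.
Set Implicit Arguments. Unset Strict Implicit. Unset Printing Implicit Defensive.
Import GRing.Theory.
Local Open Scope ring_scope.

Section DPP.
Variable F : fieldType.

Definition is_dual_prepoisson (A : lmodType F)
  (mul br : A -> A -> A) : Prop :=
  (forall (a : F) (x y z : A),
         mul (a *: x + y) z = a *: mul x z + mul y z /\
         mul z (a *: x + y) = a *: mul z x + mul z y /\
         br (a *: x + y) z = a *: br x z + br y z /\
         br z (a *: x + y) = a *: br z x + br z y) /\
      (forall x y z, mul x (mul y z) = mul (mul x y) z /\
                     mul (mul x y) z = mul (mul y x) z) /\
      (forall x y z, br x (br y z) = br (br x y) z + br y (br x z)) /\
      (forall x y z, br x (mul y z) = mul (br x y) z + mul y (br x z)) /\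
      (forall x y z, br (mul x y) z = mul x (br y z) + mul y (br x z)) /\
    (forall x y z, mul (br x y) z = - mul (br y x) z).

Definition is_rep (A : lmodType F) (mul br : A -> A -> A) (V : vectType F)
  (lo ro lb rb : A -> 'End(V)) : Prop :=
  (linear_for *:%R lo /\ linear_for *:%R ro /\
      linear_for *:%R lb /\ linear_for *:%R rb) /\
      (forall x y, (ro x \o ro y)%VF = ro (mul y x) /\
                   ro (mul y x) = (lo y \o ro x)%VF /\
                   (lo y \o ro x)%VF = (ro x \o lo y)%VF) /\
      (forall x y, lo (mul x y) = (lo x \o lo y)%VF /\
                   (lo x \o lo y)%VF = (lo y \o lo x)%VF) /\
      (forall x y, lb (br x y) = (lb x \o lb y)%VF - (lb y \o lb x)%VF) /\
      (forall x y, rb (br x y) = (rb y \o rb x)%VF + (lb x \o rb y)%VF) /\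
      (forall x y, (rb x \o rb y)%VF = - (rb x \o lb y)%VF) /\
      (forall x y, rb (mul x y) = (ro y \o rb x)%VF + (lo x \o rb y)%VF) /\
      (forall x y, (lb x \o ro y)%VF = (ro y \o lb x)%VF + ro (br x y)) /\
      (forall x y, (lb x \o lo y)%VF = lo (br x y) + (lo y \o lb x)%VF) /\
      (forall x y, (rb x \o ro y)%VF = ro (br y x) + (lo y \o rb x)%VF) /\
      (forall x y, lb (mul x y) = (lo x \o lb y)%VF + (lo y \o lb x)%VF) /\
      (forall x y, (rb x \o (lo y - ro y))%VF = 0) /\
      (forall x y, (ro x \o (lb y + rb y))%VF = 0) /\
    (forall x y, lo (br x y + br y x) = 0).

Definition dualsp (V : vectType F) : vectType F := 'Hom(V, F^o).

(* f^* for g = f(x): <g^* v*, u> = - <v*, g u>, i.e. g^* v* = - (v* o g). *)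
Definition dualmap (V : vectType F) (g : 'End(V)) : 'End(dualsp V) :=
  linfun (fun vs : dualsp V => - (vs \o g)%VF).

End DPP.

From HB Require Import structures.
From mathcomp Require Import all_boot all_order all_algebra ring.
Import GRing.Theory.
Local Open Scope ring_scope.

Set Implicit Arguments.
Unset Strict Implicit.
Unset Printing Implicit Defensive.

(* Pairing with V turns every identity between dual operators into the
   transposed identity between operators on V, since <f^* xi, v> = - xi (f v);
   so the axioms for V^* are those for V read backwards.  For any
   finite-dimensional representation W, the A-component of each axiom of the
   semidirect product A + W is the axiom in A, and the W-component, paired
   with an arbitrary functional on W, becomes a polynomial identity once the
   representation axioms collapse all composites.  Taking W = V^* gives the
   second claim. *)

Section LfunApply.
Variables (R : nzRingType) (aT rT : vectType R) (f : 'Hom(aT, rT)).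

Lemma lfunD u v : f (u + v) = f u + f v. Proof. exact: raddfD. Qed.
Lemma lfunN u : f (- u) = - f u. Proof. exact: raddfN. Qed.
Lemma lfunZ a u : f (a *: u) = a *: f u. Proof. exact: linearZ. Qed.

End LfunApply.

Lemma scale_regularE (R : pzRingType) (a : R) (x : R^o) : a *: x = a * x.
Proof. by []. Qed.

Lemma dualmapE (F : fieldType) (V : vectType F) (g : 'End(V)) (xi : dualsp V) v :
  dualmap g xi v = - xi (g v).
Proof.
have dual_linear : linear (fun xi : dualsp V => - (xi \o g)%VF).
  by move=> a xi1 xi2; rewrite comp_lfunDl -comp_lfunZl opprD scalerN.
pose dualL : {linear dualsp V -> dualsp V} :=
  HB.pack (fun xi : dualsp V => - (xi \o g)%VF)
    (GRing.isLinear.Build _ _ _ _ _ dual_linear).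
by rewrite /dualmap (lfunE dualL) /= opp_lfunE comp_lfunE.
Qed.

Lemma dualspP (F : fieldType) (W : vectType F) (u v : W) :
  (forall xi : dualsp W, xi u = xi v) <-> u = v.
Proof.
split=> [eq_pairing|-> //].
rewrite (coord_vbasis (memvf u)) (coord_vbasis (memvf v)).
apply: eq_bigr => i _; congr (_ *: _).
by have := eq_pairing (linfun (coord (vbasis {:W}) i : W -> F^o)); rewrite !lfunE.
Qed.

Lemma is_dual_prepoisson_ext (F : fieldType) (A : lmodType F)
    (mul br mul' br' : A -> A -> A) :
  mul =2 mul' -> br =2 br' ->
  is_dual_prepoisson mul br -> is_dual_prepoisson mul' br'.
Proof.
move=> eq_mul eq_br [bilin [mulA [jacobi [br_mulr [br_mull mul_brN]]]]].
by split; [|split; [|split; [|split; [|split]]]] => *; rewrite -?eq_mul -?eq_br;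
  [ apply: bilin | apply: mulA | apply: jacobi | apply: br_mulr | apply: br_mull
  | apply: mul_brN ].
Qed.

Section RepresentationRules.

Variables (F : fieldType) (A : lmodType F) (mul br : A -> A -> A).
Variables (V : vectType F) (lo ro lb rb : A -> 'End(V)).
Hypothesis rep : is_rep mul br lo ro lb rb.

Implicit Types (x y : A) (v : V).

Lemma lo_linear : linear_for *:%R lo. Proof. by case: rep => [[]]. Qed.
Lemma ro_linear : linear_for *:%R ro. Proof. by case: rep => [[_ []]]. Qed.
Lemma lb_linear : linear_for *:%R lb. Proof. by case: rep => [[_ [_ []]]]. Qed.
Lemma rb_linear : linear_for *:%R rb. Proof. by case: rep => [[_ [_ [_]]]]. Qed.

Lemma ro_ro x y v : ro x (ro y v) = ro (mul y x) v.
Proof. by case: rep => _ [/(_ x y) [<- _] _]; rewrite comp_lfunE. Qed.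

Lemma lo_ro x y v : lo y (ro x v) = ro (mul y x) v.
Proof. by case: rep => _ [/(_ x y) [_ [-> _]] _]; rewrite comp_lfunE. Qed.

Lemma ro_lo x y v : ro x (lo y v) = ro (mul y x) v.
Proof. by case: rep => _ [/(_ x y) [_ [-> ->]] _]; rewrite comp_lfunE. Qed.

Lemma lo_lo x y v : lo x (lo y v) = lo (mul x y) v.
Proof. by case: rep => _ [_ [/(_ x y) [-> _] _]]; rewrite comp_lfunE. Qed.

Lemma lo_mulC x y : lo (mul x y) = lo (mul y x).
Proof.
case: rep => _ [_ [lo_mul _]].
by rewrite !(proj1 (lo_mul _ _)) (proj2 (lo_mul x y)).
Qed.

Lemma lb_br x y v : lb (br x y) v = lb x (lb y v) - lb y (lb x v).
Proof. by move: rep; do 3 case=> _; case=> /(_ x y) -> _; rewrite !lfun_simp. Qed.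

Lemma rb_br x y v : rb (br x y) v = rb y (rb x v) + lb x (rb y v).
Proof. by move: rep; do 4 case=> _; case=> /(_ x y) -> _; rewrite !lfun_simp. Qed.

Lemma rb_rb x y v : rb x (rb y v) = - rb x (lb y v).
Proof.
by rewrite -comp_lfunE; move: rep; do 5 case=> _; case=> /(_ x y) -> _; rewrite !lfun_simp.
Qed.

Lemma rb_mul x y v : rb (mul x y) v = ro y (rb x v) + lo x (rb y v).
Proof. by move: rep; do 6 case=> _; case=> /(_ x y) -> _; rewrite !lfun_simp. Qed.

Lemma lb_ro x y v : lb x (ro y v) = ro y (lb x v) + ro (br x y) v.
Proof.
by rewrite -comp_lfunE; move: rep; do 7 case=> _; case=> /(_ x y) -> _; rewrite !lfun_simp.
Qed.

Lemma lb_lo x y v : lb x (lo y v) = lo (br x y) v + lo y (lb x v).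
Proof.
by rewrite -comp_lfunE; move: rep; do 8 case=> _; case=> /(_ x y) -> _; rewrite !lfun_simp.
Qed.

Lemma rb_ro x y v : rb x (ro y v) = ro (br y x) v + lo y (rb x v).
Proof.
by rewrite -comp_lfunE; move: rep; do 9 case=> _; case=> /(_ x y) -> _; rewrite !lfun_simp.
Qed.

Lemma lb_mul x y v : lb (mul x y) v = lo x (lb y v) + lo y (lb x v).
Proof. by move: rep; do 10 case=> _; case=> /(_ x y) -> _; rewrite !lfun_simp. Qed.

Lemma rb_lo x y v : rb x (lo y v) = rb x (ro y v).
Proof.
move: rep; do 11 case=> _; case=> /(_ x y) /lfunP/(_ v) + _.
by rewrite !lfun_simp raddfB => /subr0_eq.
Qed.

Lemma ro_rb x y v : ro x (rb y v) = - ro x (lb y v).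
Proof.
move: rep; do 12 case=> _; case=> /(_ x y) /lfunP/(_ v) + _.
by rewrite !lfun_simp raddfD => /addr0_eq <-.
Qed.

Lemma lo_br_sym x y : lo (br x y + br y x) = 0.
Proof. by move: rep; do 13 case=> _; apply. Qed.

Lemma lo_brC x y : lo (br y x) = - lo (br x y).
Proof.
apply/esym/addr0_eq; rewrite -(lo_br_sym x y).
by rewrite -[br x y]scale1r lo_linear !scale1r.
Qed.

End RepresentationRules.

Ltac rep_simpl rep :=
  repeat progress rewrite ?zero_lfunE ?lfun_simp ?dualmapE ?lfunD ?lfunN ?lfunZ
    ?scale_regularE ?(lb_br rep) ?(rb_br rep) ?(rb_mul rep) ?(lb_mul rep)
    ?(rb_lo rep) ?(rb_ro rep) ?(lb_ro rep) ?(lb_lo rep) ?(rb_rb rep)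
    ?(ro_rb rep) ?(ro_ro rep) ?(lo_ro rep) ?(ro_lo rep) ?(lo_lo rep)
    ?(lo_br_sym rep).

(* lo_mulC and lo_brC cannot be oriented as rewrite rules, so the finisher
   tries them on the two arguments at hand. *)
Ltac rep_ring rep x y :=
  rep_simpl rep; first
    [ ring
    | rewrite (lo_mulC rep x y); ring
    | rewrite (lo_brC rep x y); rep_simpl rep; ring ].

Lemma dual_rep (F : fieldType) (A : lmodType F) (mul br : A -> A -> A)
    (V : vectType F) (lo ro lb rb : A -> 'End(V)) :
  is_rep mul br lo ro lb rb ->
  is_rep mul br
    (fun x => - dualmap (lo x))
    (fun x => - dualmap (lo x) + dualmap (ro x))
    (fun x => dualmap (lb x))
    (fun x => - dualmap (lb x) - dualmap (rb x)).
Proof.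
move=> rep; split.
  split; [|split; [|split]] => a x y; apply/lfunP=> xi; apply/lfunP=> v;
  rewrite ?(lo_linear rep) ?(ro_linear rep) ?(lb_linear rep) ?(rb_linear rep);
  rep_simpl rep; ring.
repeat apply: conj; move=> x y; repeat split;
  apply/lfunP=> xi; apply/lfunP=> v; rep_ring rep x y.
Qed.

Section SemidirectProduct.

Variables (F : fieldType) (A : lmodType F) (mul br : A -> A -> A).
Variables (W : vectType F) (lo ro lb rb : A -> 'End(W)).
Hypotheses (dpp : is_dual_prepoisson mul br) (rep : is_rep mul br lo ro lb rb).

Definition semidirect_mul (p q : A * W) : A * W :=
  (mul p.1 q.1, lo p.1 q.2 + ro q.1 p.2).
Definition semidirect_br (p q : A * W) : A * W :=
  (br p.1 q.1, lb p.1 q.2 + rb q.1 p.2).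

Lemma semidirect_dual_prepoisson :
  is_dual_prepoisson semidirect_mul semidirect_br.
Proof.
have [bilin [mulA [jacobi [br_mulr [br_mull mul_brN]]]]] := dpp.
split; [|split; [|split; [|split; [|split]]]].
- move=> a [x u] [y v] [z w]; have [mulDl [mulDr [brDl brDr]]] := bilin a x y z.
  by repeat split; apply: injective_projections => //=; apply/dualspP => xi;
    rewrite ?(lo_linear rep) ?(ro_linear rep) ?(lb_linear rep) ?(rb_linear rep);
    rep_simpl rep; ring.
- move=> [x u] [y v] [z w]; have [mul_assoc mul_comml] := mulA x y z.
  by split; apply: injective_projections => //=; apply/dualspP => xi; rep_ring rep x y.
all: move=> [x u] [y v] [z w]; apply: injective_projections => /=;
  [ first [exact: jacobi | exact: br_mulr | exact: br_mull | exact: mul_brN]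
  | apply/dualspP => xi; rep_ring rep x y ].
Qed.

End SemidirectProduct.

Theorem proposition2p30 (F : fieldType) (hF : [pchar F] =i pred0)
  (A : lmodType F) (mul br : A -> A -> A) (V : vectType F)
  (lo ro lb rb : A -> 'End(V)) :
  is_dual_prepoisson mul br ->
  is_rep mul br lo ro lb rb ->
  is_rep mul br
    (fun x => - dualmap (lo x))
    (fun x => - dualmap (lo x) + dualmap (ro x))
    (fun x => dualmap (lb x))
    (fun x => - dualmap (lb x) - dualmap (rb x))
  /\
  is_dual_prepoisson (A := (A * dualsp V)%type)
    (fun p q => (mul p.1 q.1,
                 - dualmap (lo p.1) q.2
                 + (- dualmap (lo q.1) + dualmap (ro q.1)) p.2))
    (fun p q => (br p.1 q.1,
                 dualmap (lb p.1) q.2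
                 - (dualmap (lb q.1) + dualmap (rb q.1)) p.2)).
Proof.
move=> dpp rep; split; first exact: dual_rep.
apply: is_dual_prepoisson_ext (semidirect_dual_prepoisson dpp (dual_rep rep)) => p q.
  by rewrite /semidirect_mul opp_lfunE.
by rewrite /semidirect_br -opp_lfunE opprD.
Qed.
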